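(* Let $X\subset\mathbb{R}^n$, $n\ge2$, be an open convex bounded domain, let $\alpha\in\mathbb{R}$ with $(n-2)\alpha+1\neq0$, let $\sigma>0$ be a (sufficiently smooth) conductivity on $X$ and let $u_1,\dots,u_n$ be (sufficiently smooth) solutions of $\nabla\cdot(\sigma\nabla u_i)=0$ in $X$. Set $S_i=\sigma^\alpha\nabla u_i$. Let $\Omega\subset X$ be open with $$\inf_{x\in\Omega}\det(S_1(x),\dots,S_n(x))\ge c_0>0.$$ Let $H(x)$ be the $n\times n$ matrix with entries $H_{ij}(x)=S_i(x)\cdot S_j(x)$, $H^{ij}$ the $(i,j)$ entry of $H^{-1}$, and $D(x)=\sqrt{\det H(x)}$. Then at every $x\in\Omega$, $F:=\nabla\log\sigma$ satisfies $$F=\frac{c_F}{D}\sum_{i,j=1}^n\big(\nabla(DH^{ij})\cdot S_i\big)S_j=c_F\Big(\nabla\log D+\sum_{i,j=1}^n(\nabla H^{ij}\cdot S_i)S_j\Big),\qquad c_F:=((n-2)\alpha+1)^{-1}.$$ *)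

From HB Require Import structures.
From mathcomp Require Import all_boot all_order all_algebra.
From mathcomp Require Import all_classical all_reals all_analysis.
Set Implicit Arguments. Unset Strict Implicit. Unset Printing Implicit Defensive.
Import Order.TTheory GRing.Theory Num.Theory.
Import numFieldNormedType.Exports.
Local Open Scope ring_scope.
Local Open Scope classical_set_scope.

Section Defs.
Variables (R : realType) (n : nat).
Notation V := 'rV[R]_n.

Definition partial (i : 'I_n) (f : V -> R) : V -> R :=
  fun x => 'D_(delta_mx 0 i) f x.

Definition grad (f : V -> R) (x : V) : V := \row_i partial i f x.

Definition divg (F : V -> V) (x : V) : R :=
  \sum_(i < n) partial i (fun y => F y 0 i) x.

Definition dotv (a b : V) : R := \sum_(k < n) a 0 k * b 0 k.

Fixpoint iterd (s : seq 'I_n) (f : V -> R) : V -> R :=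
  match s with
  | [::] => f
  | i :: s' => partial i (iterd s' f)
  end.

(* "sufficiently smooth": every iterated partial derivative is
   (Frechet) differentiable at every point of A (C^infinity on A) *)
Definition smooth_on (A : set V) (f : V -> R) : Prop :=
  forall (s : seq 'I_n) (x : V), A x -> differentiable (iterd s f) x.

End Defs.

(* Let A be the matrix with rows S_i, so that H = A A^T and D = det A on Omega,
   and let N_a be the derivative of A along the a-th coordinate.  Jacobi's formula
   gives d_a log D = tr (A^-1 N_a), and d_a H^-1 = - H^-1 (N_a A^T + A N_a^T) H^-1.
   Two facts about N_a make the right-hand side collapse to ((n-2) alpha + 1) F:
   the symmetry of the second derivatives of u_i gives
   N_a[i,b] - N_b[i,a] = alpha (F_a A[i,b] - F_b A[i,a]), and the conductivity
   equation gives sum_a N_a[i,a] = (alpha - 1) sum_a F_a A[i,a].  The first formula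
   follows from the second by the product rule, since sum_ij H^ij (v.S_i) S_j = v
   for every vector v. *)

From HB Require Import structures.
From mathcomp Require Import all_boot all_order all_algebra.
From mathcomp Require Import all_classical all_reals all_analysis.
From mathcomp Require Import perm ring lra.
Set Implicit Arguments. Unset Strict Implicit. Unset Printing Implicit Defensive.
Import Order.TTheory GRing.Theory Num.Theory.
Import numFieldNormedType.Exports.
Local Open Scope ring_scope.
Local Open Scope classical_set_scope.

(** * Directional derivatives *)

Section DirectionalDerivatives.
Variables (R : realType) (V : normedModType R).
Implicit Types (f : V -> R) (x v : V).

Lemma line_growth_rateE f v y (s0 : R) :
  (fun h : R => h^-1 *: (((fun s : R => f (s *: v + y)) \o shift s0) (h *: 1)
                         - f (s0 *: v + y)))
  = (fun h : R => h^-1 *: ((f \o shift (s0 *: v + y)) (h *: v) - f (s0 *: v + y))).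
Proof.
apply/funext => h /=; congr (_ *: (f _ - _)).
by rewrite [h *: 1]mulr1 scalerDl addrA.
Qed.

Lemma derivable_line f v y (s0 : R) :
  derivable f (s0 *: v + y) v -> derivable (fun s : R => f (s *: v + y)) s0 1.
Proof. by rewrite /derivable -line_growth_rateE. Qed.

Lemma derive_line f v y (s0 : R) :
  'D_1 (fun s : R => f (s *: v + y)) s0 = 'D_v f (s0 *: v + y).
Proof. by rewrite /derive -line_growth_rateE. Qed.

Lemma is_derive_line f v y (s : R) :
  differentiable f (s *: v + y) ->
  is_derive s 1 (fun s : R => f (s *: v + y)) ('D_v f (s *: v + y)).
Proof.
move=> df; split; last exact: derive_line.
by apply: derivable_line; exact: diff_derivable.
Qed.

Lemma is_derive_comp1 f (g : R -> R) x v df dg :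
  is_derive x v f df -> is_derive (f x) 1 g dg ->
  is_derive x v (fun y => g (f y)) (dg * df).
Proof.
move=> [fd <-] [gd <-].
have ex : x = 0 *: v + x by rewrite scale0r add0r.
have fd1 : derivable (fun s : R => f (s *: v + x)) 0 1.
  by apply: derivable_line; rewrite -ex.
have gd1 : derivable g ((fun s : R => f (s *: v + x)) 0) 1 by rewrite /= -ex.
split.
  apply/derivable1P/derivable1_diffP => /=.
  by apply: differentiable_comp; exact/derivable1_diffP.
rewrite {1}ex -derive_line -derive1E.
have -> : (fun s : R => (g \o f) (s *: v + x)) = g \o (fun s : R => f (s *: v + x)) by [].
by rewrite derive1_comp // !derive1E derive_line -ex.
Qed.

Lemma is_derive_big_sum (I : Type) (r : seq I) (P : pred I)
    (F : I -> V -> R) (dF : I -> R) x v :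
  (forall i, P i -> is_derive x v (F i) (dF i)) ->
  is_derive x v (fun y => \sum_(i <- r | P i) F i y) (\sum_(i <- r | P i) dF i).
Proof.
move=> dFi; rewrite -fct_sumE.
elim/big_ind2: _ => // [|f df g dg fd gd]; first exact: is_derive_cst.
exact: is_deriveD.
Qed.

Lemma is_derive_prod m (F : 'I_m -> V -> R) (dF : 'I_m -> R) x v :
  (forall i, is_derive x v (F i) (dF i)) ->
  is_derive x v (fun y => \prod_(i < m) F i y)
    (\sum_(k < m) \prod_(i < m) (if i == k then dF i else F i x)).
Proof.
elim: m F dF => [|m IH] F dF dFi.
  rewrite big_ord0; under eq_fun do rewrite big_ord0; exact: is_derive_cst.
under eq_fun do rewrite big_ord_recr /=.
apply: is_derive_eq; first exact: is_deriveM (IH _ _ (fun i => dFi _)) (dFi ord_max).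
rewrite [RHS]big_ord_recr /= addrC; congr (_ + _).
  rewrite big_ord_recr /= eqxx; congr (_ * _).
  by apply: eq_bigr => i _; rewrite -val_eqE /= ltn_eqF.
rewrite -[_ *: _]/(_ * _) big_distrr /=; apply: eq_bigr => k _.
by rewrite big_ord_recr /= mulrC -val_eqE /= eq_sym ltn_eqF.
Qed.

Lemma det_row_replace_sum m (A N : 'M[R]_m) :
  \sum_(k < m) \det (\matrix_(i, j) if i == k then N i j else A i j)
  = \tr (N *m \adj A).
Proof.
apply: eq_bigr => k _; rewrite (expand_det_row _ k) !mxE.
apply: eq_bigr => j _; rewrite !mxE eqxx; congr (_ * _).
rewrite /cofactor; congr (_ * \det _); apply/matrixP => i j'.
by rewrite !mxE eq_sym (negbTE (neq_lift k i)).
Qed.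

Lemma is_derive_det m (M : V -> 'M[R]_m) (N : 'M[R]_m) x v :
  (forall i j, is_derive x v (fun y => M y i j) (N i j)) ->
  is_derive x v (fun y => \det (M y)) (\tr (N *m \adj (M x))).
Proof.
move=> dM; rewrite -det_row_replace_sum.
have -> : \sum_(k < m) \det (\matrix_(i, j) if i == k then N i j else M x i j) =
    \sum_(s : 'S_m) (-1) ^+ s * \sum_(k < m) \prod_(i < m)
      (if i == k then N i (s i) else M x i (s i)).
  rewrite exchange_big /=; apply: eq_bigr => s _.
  rewrite big_distrr /=; apply: eq_bigr => k _; congr (_ * _).
  by apply: eq_bigr => i _; rewrite mxE; case: ifP.
apply: is_derive_big_sum => s _.
apply: is_derive_eq.
  exact: is_deriveM (is_derive_cst _ _ _) (is_derive_prod (fun i => dM i (s i))).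
by rewrite -[_ *: _]/(_ * _) -[_ *: 0]/(_ * 0) mulr0 addr0.
Qed.

Lemma is_derive_mulmx m p q (P : V -> 'M[R]_(m, p)) (Q : V -> 'M[R]_(p, q))
    (dP : 'M[R]_(m, p)) (dQ : 'M[R]_(p, q)) x v :
  (forall i k, is_derive x v (fun y => P y i k) (dP i k)) ->
  (forall k j, is_derive x v (fun y => Q y k j) (dQ k j)) ->
  forall i j, is_derive x v (fun y => (P y *m Q y) i j)
                            ((dP *m Q x + P x *m dQ) i j).
Proof.
move=> dPik dQkj i j; under eq_fun do rewrite mxE.
apply: is_derive_eq; first by apply: is_derive_big_sum => k _; exact: is_deriveM.
by rewrite !mxE addrC big_split; congr (_ + _); apply: eq_bigr => k _; rewrite mulrC.
Qed.

(* The entries of [invmx (M y)] are quotients of determinants (Cramer's rule). *)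
Lemma derivable_invmx m (M : V -> 'M[R]_m) x v :
  (forall i j, derivable (fun y => M y i j) x v) ->
  (\forall y \near x, M y \in unitmx) ->
  forall i j, derivable (fun y => invmx (M y) i j) x v.
Proof.
move=> dM uM i j.
pose N := \matrix_(a, b) 'D_v (fun y => M y a b) x.
have dM' a b : is_derive x v (fun y => M y a b) (N a b).
  by rewrite mxE; exact: derivableP.
have [ddet _] := is_derive_det dM'.
have dminor_entries a b : is_derive x v (fun y => row' j (col' i (M y)) a b)
                                          (row' j (col' i N) a b).
  by rewrite !mxE; under eq_fun do rewrite !mxE; exact/derivableP/dM.
have [dminor _] := is_derive_det dminor_entries.
have det_neq0 : \det (M x) != 0 by rewrite -unitfE -unitmxE (nbhs_singleton uM).
apply: (near_eq_derivable (f := fun y =>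
    (\det (M y))^-1 * ((-1) ^+ (j + i) * \det (row' j (col' i (M y)))))).
  near=> y; rewrite /invmx; have -> : M y \in unitmx by near: y.
  by rewrite !mxE /cofactor.
apply: derivableM; first exact: derivableV.
by apply: derivableM; first exact: derivable_cst.
Unshelve. all: by end_near. Qed.

Lemma is_derive_invmx m (M : V -> 'M[R]_m) (N : 'M[R]_m) x v :
  (forall i j, is_derive x v (fun y => M y i j) (N i j)) ->
  (\forall y \near x, M y \in unitmx) ->
  forall i j, is_derive x v (fun y => invmx (M y) i j)
                            ((- (invmx (M x) *m N *m invmx (M x))) i j).
Proof.
move=> dM uM.
(* Differentiate [invmx (M y) *m M y = 1]. *)
pose dInv := \matrix_(i, j) 'D_v (fun y => invmx (M y) i j) x.
have dInvE i j : is_derive x v (fun y => invmx (M y) i j) (dInv i j).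
  rewrite mxE; apply/derivableP/(derivable_invmx _ uM) => a b.
  by have [] := dM a b.
have Mx_unit : M x \in unitmx := nbhs_singleton uM.
suff dInv_eq : dInv *m M x + invmx (M x) *m N = 0.
  have dInvV : dInv = - (invmx (M x) *m N *m invmx (M x)).
    rewrite -mulNmx -(add0r (- _)) -dInv_eq addrK.
    by rewrite -mulmxA mulmxV // mulmx1.
  by rewrite -dInvV.
apply/matrixP => i j.
have dprod := is_derive_mulmx dInvE dM i j.
have dcst : is_derive x v (fun y => (invmx (M y) *m M y) i j) 0.
  apply: near_eq_is_derive (is_derive_cst ((1%:M : 'M[R]_m) i j) x v).
  by near=> y; rewrite mulVmx //; near: y.
by have [_ <-] := dprod; have [_ ->] := dcst; rewrite mxE.
Unshelve. all: by end_near. Qed.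

End DirectionalDerivatives.

(** * Symmetry of second derivatives *)

Section SecondDerivativeSymmetry.
Variables (R : realType) (W : normedModType R).
Implicit Types (f : W -> R) (x a b : W).

Lemma differentiable_linear_approx (g : W -> R) x (eps : R) :
  0 < eps -> differentiable g x ->
  exists2 d, 0 < d & forall h, `|h| < d ->
    `|g (h + x) - (g x + 'd g x h)| <= eps * `|h|.
Proof.
move=> eps_gt0 /diff_locally /eqaddoP /(_ eps eps_gt0) /nbhs_norm0P [d d_gt0 gd].
by exists d => // h hd; have := gd h hd.
Qed.

Definition second_difference f x a b (t : R) :=
  f (t *: a + (t *: b + x)) - f (t *: a + x) - f (t *: b + x) + f x.

Lemma second_differenceC f x a b t :
  second_difference f x a b t = second_difference f x b a t.
Proof. by rewrite /second_difference addrCA; ring. Qed.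

Lemma second_difference_MVT f x a b (t : R) : 0 < t ->
  (forall s, 0 <= s <= t ->
     differentiable f (s *: a + (t *: b + x)) /\ differentiable f (s *: a + x)) ->
  exists2 c, 0 <= c <= t &
    second_difference f x a b t
    = t * ('D_a f (c *: a + (t *: b + x)) - 'D_a f (c *: a + x)).
Proof.
move=> t_gt0 df.
pose F s := f (s *: a + (t *: b + x)) - f (s *: a + x).
pose dF s := 'D_a f (s *: a + (t *: b + x)) - 'D_a f (s *: a + x).
have F_der s : 0 <= s <= t -> is_derive s 1 F (dF s).
  by move=> /df[df1 df2]; exact: is_deriveB (is_derive_line df1) (is_derive_line df2).
have [c /[!in_itv]/= c0t FtF0] : exists2 c, c \in `[0, t]%R & F t - F 0 = dF c * (t - 0).
  apply: MVT_segment (ltW t_gt0) _ _.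
    by move=> s /[!in_itv]/= /andP[s0 st]; apply: F_der; rewrite !ltW.
  by apply: derivable_within_continuous => s /[!in_itv]/= /F_der [].
exists c => //; move: FtF0; rewrite /F /dF /second_difference !scale0r !add0r.
by rewrite subr0 mulrC => <-; ring.
Qed.

Lemma second_difference_estimate f x a b (eps : R) : 0 < eps ->
  (\forall y \near x, differentiable f y) -> differentiable ('D_a f) x ->
  exists2 d, 0 < d & forall t, 0 < t -> t < d ->
    `|second_difference f x a b t - t ^+ 2 * 'D_b ('D_a f) x|
      <= 2 * eps * (`|a| + `|b|) * t ^+ 2.
Proof.
move=> eps_gt0 df dDf; set g := 'D_a f.
have [d1 d1_gt0 g_lin] := differentiable_linear_approx eps_gt0 dDf.
have [d2 d2_gt0 df_ball] : exists2 d, 0 < d & forall y, `|x - y| < d -> differentiable f y.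
  by move/nbhs_normP: df => [d d_gt0 dfd]; exists d => // y hy; apply: dfd.
set C := `|a| + `|b|; have C_ge0 : 0 <= C by rewrite addr_ge0.
set d := Num.min d1 d2; have d_gt0 : 0 < d by rewrite lt_min d1_gt0 d2_gt0.
exists (d / (C + 1)); first by rewrite divr_gt0 // ltr_wpDl.
move=> t t_gt0 td; have tC : t * C < d.
  by rewrite ltr_pdivlMr ?ltr_wpDl // in td; nra.
have small s : 0 <= s <= t -> `|s *: a + t *: b| <= t * C /\ `|s *: a| <= t * C.
  move=> /andP[s_ge0 st]; have sa : `|s *: a| <= t * `|a|.
    by rewrite normrZ ger0_norm // ler_wpM2r.
  have tb : `|t *: b| = t * `|b| by rewrite normrZ gtr0_norm.
  split; first by rewrite (le_trans (ler_normD _ _)) // tb /C mulrDr lerD2r.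
  by rewrite (le_trans sa) // /C mulrDr lerDl mulr_ge0 // ltW.
have [d_le_d1 d_le_d2] : d <= d1 /\ d <= d2 by rewrite !ge_min !lexx orbT.
have [c /small[c1 c2] ->] : exists2 c, 0 <= c <= t & second_difference f x a b t
    = t * (g (c *: a + (t *: b + x)) - g (c *: a + x)).
  apply: second_difference_MVT => // s /small[s1 s2].
  split; apply: df_ball; rewrite ?addrA opprD addrCA subrr addr0 normrN.
    by rewrite (le_lt_trans s1) // (lt_le_trans tC).
  by rewrite (le_lt_trans s2) // (lt_le_trans tC).
have lin h : `|h| <= t * C -> `|g (h + x) - (g x + 'd g x h)| <= eps * (t * C).
  move=> hC; rewrite (le_trans (g_lin h _)) ?ler_wpM2l ?(ltW eps_gt0) //.
  by rewrite (le_lt_trans hC) // (lt_le_trans tC).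
have e1 := lin _ c1; have e2 := lin _ c2.
have -> : t * (g (c *: a + (t *: b + x)) - g (c *: a + x)) - t ^+ 2 * 'D_b g x
    = t * ((g (c *: a + t *: b + x) - (g x + 'd g x (c *: a + t *: b)))
           - (g (c *: a + x) - (g x + 'd g x (c *: a)))).
  have Lh : 'd g x (c *: a + t *: b) = 'd g x (c *: a) + t * 'd g x b.
    by rewrite linearD [_ (t *: b)]linearZ.
  by rewrite deriveE // Lh addrA; ring.
rewrite normrM gtr0_norm // (le_trans (ler_wpM2l (ltW t_gt0) (ler_normB _ _))) //.
nra.
Qed.

(* Both iterated derivatives are the limit of [second_difference f x a b t / t^2]
   as t -> 0+, and the second difference is symmetric in a and b. *)
Lemma derive_comm f x a b :
  (\forall y \near x, differentiable f y) ->
  differentiable ('D_a f) x -> differentiable ('D_b f) x ->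
  'D_b ('D_a f) x = 'D_a ('D_b f) x.
Proof.
move=> df dDaf dDbf.
apply/eqP; rewrite -subr_eq0 -normr_le0; apply/ler_addgt0Pr => e e_gt0.
rewrite add0r; set C := `|a| + `|b|; have C_ge0 : 0 <= C by rewrite addr_ge0.
set eps := e / (4 * (C + 1)).
have eps_gt0 : 0 < eps by rewrite divr_gt0 // mulr_gt0 // ltr_wpDl.
have [d1 d1_gt0 est_ab] := second_difference_estimate b eps_gt0 df dDaf.
have [d2 d2_gt0 est_ba] := second_difference_estimate a eps_gt0 df dDbf.
set t := Num.min d1 d2 / 2.
have [t_gt0 td1 td2] : [/\ 0 < t, t < d1 & t < d2].
  have dmin_gt0 : 0 < Num.min d1 d2 by rewrite lt_min d1_gt0 d2_gt0.
  have : t < Num.min d1 d2 by rewrite ltr_pdivrMr // ltr_pMr // ltr1n.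
  by rewrite lt_min => /andP[? ?]; split; rewrite ?divr_gt0.
have := est_ab t t_gt0 td1; have := est_ba t t_gt0 td2.
rewrite second_differenceC [`|b| + _]addrC -/C.
set A := 'D_b ('D_a f) x; set B := 'D_a ('D_b f) x.
set D := second_difference f x a b t => DB DA.
have t2_gt0 : 0 < t ^+ 2 by rewrite exprn_gt0.
have : t ^+ 2 * `|A - B| <= t ^+ 2 * (4 * eps * C).
  have -> : t ^+ 2 * `|A - B| = `|(D - t ^+ 2 * B) - (D - t ^+ 2 * A)|.
    rewrite -[t ^+ 2 in LHS]ger0_norm ?(ltW t2_gt0) // -normrM.
    by congr `|_|; ring.
  have -> : t ^+ 2 * (4 * eps * C) = 2 * eps * C * t ^+ 2 + 2 * eps * C * t ^+ 2.
    by ring.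
  exact: le_trans (ler_normB _ _) (lerD DB DA).
rewrite ler_pM2l // => /le_trans; apply.
have -> : 4 * eps * C = e * (C / (C + 1)).
  by rewrite /eps; field; rewrite gt_eqF // ltr_wpDl.
by rewrite ler_piMr ?(ltW e_gt0) // ler_pdivrMr ?ltr_wpDl // mul1r lerDl.
Qed.

End SecondDerivativeSymmetry.

(** * Gram matrices *)

Section GramMatrix.
Variables (K : fieldType) (m : nat).
Implicit Types (A N : 'M[K]_m).

Lemma trmx_mul_invmx_gram A : A \in unitmx -> A^T *m invmx (A *m A^T) = invmx A.
Proof.
move=> uA; have uG : A *m A^T \in unitmx by rewrite unitmx_mul unitmx_tr uA.
by rewrite -[LHS]mul1mx -(mulVmx uA) -!mulmxA (mulmxA A) mulmxV // mulmx1.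
Qed.

Lemma invmx_gram_mul A : A \in unitmx -> invmx (A *m A^T) *m A = (invmx A)^T.
Proof.
move=> uA; rewrite -(trmx_mul_invmx_gram uA) trmx_mul trmxK.
by rewrite trmx_inv trmx_mul trmxK.
Qed.

Definition gram_invmx_deriv A N :=
  - (invmx (A *m A^T) *m (N *m A^T + A *m N^T) *m invmx (A *m A^T)).

Lemma gram_invmx_derivE A N : A \in unitmx ->
  A^T *m gram_invmx_deriv A N *m A = - ((invmx A *m N)^T + invmx A *m N).
Proof.
move=> uA; rewrite mulmxN mulNmx -!mulmxA invmx_gram_mul // !mulmxA.
rewrite trmx_mul_invmx_gram // addrC mulmxDr mulmxDl !mulmxA mulVmx // mul1mx.
by rewrite -[_ *m A^T *m _]mulmxA -[A^T *m _]trmx_mul mulVmx // trmx1 mulmx1 trmx_mul.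
Qed.

Lemma sum_mul_delta (f : 'I_m -> K) (c : 'I_m) :
  \sum_a f a * (1%:M : 'M[K]_m) a c = f c.
Proof.
rewrite (bigD1 c) //= mxE eqxx mulr1 big1 ?addr0 // => a /negbTE ac.
by rewrite mxE ac mulr0.
Qed.

Lemma gram_gradient_identity A (N : 'I_m -> 'M[K]_m) (f : 'I_m -> K) (al : K)
    (c : 'I_m) :
  A \in unitmx ->
  (forall a i b, N a i b - N b i a = al * (f a * A i b - f b * A i a)) ->
  (forall i, \sum_a N a i a = (al - 1) * \sum_a f a * A i a) ->
  \tr (invmx A *m N c) + \sum_a (A^T *m gram_invmx_deriv A (N a) *m A) a c
    = ((m%:R - 2) * al + 1) * f c.
Proof.
move=> uA N_antisym N_trace; set B := invmx A.
have BA : B *m A = 1%:M by rewrite mulVmx.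
have antisym : \tr (B *m N c) - \sum_a (B *m N a) a c = al * (m%:R - 1) * f c.
  transitivity (al * (f c * \sum_a (B *m A) a a - \sum_a f a * (B *m A) a c)).
    rewrite /mxtrace -sumrB mulr_sumr -sumrB mulr_sumr; apply: eq_bigr => a _.
    rewrite !mxE -sumrB mulr_sumr mulr_sumr -sumrB mulr_sumr; apply: eq_bigr => i _.
    by rewrite -mulrBr N_antisym; ring.
  rewrite BA sum_mul_delta -/(\tr 1%:M) mxtrace1; ring.
have trace : \sum_a (B *m N a) c a = (al - 1) * f c.
  transitivity ((al - 1) * \sum_a f a * (B *m A) c a); last first.
    rewrite BA; congr (_ * _); rewrite -[RHS]sum_mul_delta.
    by apply: eq_bigr => a _; rewrite !mxE eq_sym.
  under eq_bigr do rewrite mxE; rewrite [LHS]exchange_big /=.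
  transitivity (\sum_i B c i * ((al - 1) * \sum_a f a * A i a)).
    by apply: eq_bigr => i _; rewrite -N_trace mulr_sumr.
  rewrite [RHS]mulr_sumr; under [RHS]eq_bigr do rewrite mxE !mulr_sumr.
  rewrite [RHS]exchange_big; apply: eq_bigr => i _ /=.
  by rewrite !mulr_sumr; apply: eq_bigr => a _; ring.
have pullback a : (A^T *m gram_invmx_deriv A (N a) *m A) a c
    = - ((B *m N a) c a + (B *m N a) a c).
  by rewrite gram_invmx_derivE // !mxE.
under eq_bigr do rewrite pullback.
rewrite sumrN big_split /= trace opprD addrCA antisym; ring.
Qed.

End GramMatrix.

Section RowExpansion.
Variables (R : realType) (m : nat).
Implicit Types (u v w : 'rV[R]_m) (s : 'I_m -> 'rV[R]_m).

Lemma row_lin_comb (k l : R) (f g : 'I_m -> R) :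
  k *: \row_c f c + l *: \row_c g c = \row_c (k * f c + l * g c).
Proof. by apply/rowP => c; rewrite !mxE. Qed.

Lemma dotvDl u v w : dotv (u + v) w = dotv u w + dotv v w.
Proof. by rewrite /dotv -big_split; apply: eq_bigr => k _; rewrite mxE mulrDl. Qed.

Lemma dotvZl (k : R) v w : dotv (k *: v) w = k * dotv v w.
Proof. by rewrite /dotv mulr_sumr; apply: eq_bigr => i _; rewrite mxE mulrA. Qed.

Lemma sum_dotv_rows s (W : 'I_m -> 'M[R]_m) :
  \sum_i \sum_j dotv (\row_a W a i j) (s i) *: s j
    = \row_c \sum_a ((\matrix_i s i)^T *m W a *m \matrix_i s i) a c.
Proof.
apply/rowP => c; rewrite !mxE summxE.
transitivity (\sum_i \sum_j \sum_a s i 0 a * W a i j * s j 0 c).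
  apply: eq_bigr => i _; rewrite summxE; apply: eq_bigr => j _.
  by rewrite mxE big_distrl; apply: eq_bigr => a _; rewrite mxE /=; ring.
under eq_bigr do rewrite exchange_big; rewrite exchange_big.
apply: eq_bigr => a _ /=; rewrite mxE exchange_big; apply: eq_bigr => j _ /=.
by rewrite !mxE big_distrl; apply: eq_bigr => i _; rewrite !mxE.
Qed.

Lemma sum_gram_invmx_dotv s v : \matrix_i s i \in unitmx ->
  \sum_i \sum_j (invmx (\matrix_i s i *m (\matrix_i s i)^T) i j * dotv v (s i)) *: s j
    = v.
Proof.
set A := \matrix_i s i; set G := invmx (A *m A^T) => uA.
transitivity (\sum_i \sum_j dotv (\row_a (v 0 a *: G) i j) (s i) *: s j).
  apply: eq_bigr => i _; apply: eq_bigr => j _; congr (_ *: _).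
  by rewrite /dotv mulr_sumr; apply: eq_bigr => k _; rewrite !mxE; ring.
rewrite sum_dotv_rows; apply/rowP => c; rewrite mxE.
under eq_bigr do rewrite -scalemxAr -scalemxAl trmx_mul_invmx_gram // mulVmx // mxE.
exact: sum_mul_delta.
Qed.

Lemma sum_dotv_rows_productE s (d : R) (gD : 'rV[R]_m)
    (gG gDG : 'I_m -> 'I_m -> 'rV[R]_m) :
  \matrix_i s i \in unitmx ->
  (forall i j, gDG i j
     = d *: gG i j + (invmx (\matrix_i s i *m (\matrix_i s i)^T) i j * d) *: gD) ->
  \sum_i \sum_j dotv (gDG i j) (s i) *: s j
    = d *: (gD + \sum_i \sum_j dotv (gG i j) (s i) *: s j).
Proof.
move=> uA gDGE; rewrite scalerDr addrC -(sum_gram_invmx_dotv gD uA) !scaler_sumr.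
rewrite -big_split; apply: eq_bigr => i _; rewrite !scaler_sumr -big_split.
apply: eq_bigr => j _; rewrite /= gDGE dotvDl !dotvZl !scalerA -scalerDl.
congr (_ *: _); ring.
Qed.

End RowExpansion.

(** * The conductivity identity *)

Section Conductivity.
Variables (R : realType) (n : nat) (X : set 'rV[R]_n) (alpha : R)
  (sigma : 'rV[R]_n -> R) (u : 'I_n -> 'rV[R]_n -> R).
Hypotheses (X_open : open X) (sigma_gt0 : forall x, X x -> 0 < sigma x)
  (sigma_smooth : smooth_on X sigma) (u_smooth : forall i, smooth_on X (u i))
  (u_eq : forall i x, X x -> divg (fun y => sigma y *: grad (u i) y) x = 0).

Definition Sfield i y : 'rV[R]_n := sigma y `^ alpha *: grad (u i) y.
Definition Smx y : 'M[R]_n := \matrix_i Sfield i y.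
Definition gram y : 'M[R]_n := \matrix_(i, j) dotv (Sfield i y) (Sfield j y).
Definition vol y : R := Num.sqrt (\det (gram y)).

Lemma SmxE y i b : Smx y i b = sigma y `^ alpha * partial b (u i) y.
Proof. by rewrite [Smx y i b]mxE [LHS]mxE [grad (u i) y 0 b]mxE. Qed.

Lemma gramE y : gram y = Smx y *m (Smx y)^T.
Proof.
apply/matrixP => i j; rewrite !mxE /dotv.
by apply: eq_bigr => k _; rewrite !mxE.
Qed.

Lemma volE y : 0 <= \det (Smx y) -> vol y = \det (Smx y).
Proof.
by move=> det_ge0; rewrite /vol gramE det_mulmx det_tr -expr2 sqrtr_sqr ger0_norm.
Qed.

Variable x : 'rV[R]_n.
Hypothesis xX : X x.

Let sigma_x_gt0 : 0 < sigma x := sigma_gt0 xX.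

Definition dS (a i b : 'I_n) : R :=
  alpha * sigma x `^ (alpha - 1) * partial a sigma x * partial b (u i) x
  + sigma x `^ alpha * partial a (partial b (u i)) x.

Lemma is_derive_sigma a : is_derive x (delta_mx 0 a) sigma (partial a sigma x).
Proof. exact/derivableP/diff_derivable/(sigma_smooth [::]). Qed.

Lemma is_derive_partial_u i b a :
  is_derive x (delta_mx 0 a) (partial b (u i)) (partial a (partial b (u i)) x).
Proof. exact/derivableP/diff_derivable/(u_smooth i [:: b]). Qed.

Lemma grad_ln_sigma :
  grad (fun y => ln (sigma y)) x = \row_c ((sigma x)^-1 * partial c sigma x).
Proof.
apply/rowP => c; rewrite !mxE.
by case: (is_derive_comp1 (is_derive_sigma c) (is_derive1_ln sigma_x_gt0)) => _ <-.
Qed.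

Lemma is_derive_Smx a i b :
  is_derive x (delta_mx 0 a) (fun y => Smx y i b) (dS a i b).
Proof.
under eq_fun do rewrite !mxE.
have dpow := is_derive_comp1 (is_derive_sigma a) (is_derive1_powR alpha sigma_x_gt0).
apply: is_derive_eq; first exact: is_deriveM dpow (is_derive_partial_u i b a).
by rewrite addrC; congr (_ + _); exact: mulrC.
Qed.

Let powR_pred : sigma x `^ (alpha - 1) = sigma x `^ alpha / sigma x.
Proof.
rewrite powRB ?powRr1 ?(ltW sigma_x_gt0) //.
by apply/implyP => _; rewrite gt_eqF.
Qed.

Lemma partial_u_comm i a b :
  partial a (partial b (u i)) x = partial b (partial a (u i)) x.
Proof.
have du_near : \forall y \near x, differentiable (u i) y.
  by near=> y; apply: (u_smooth i [::]); near: y; exact: open_nbhs_nbhs.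
exact: (derive_comm du_near (u_smooth i [:: b] xX) (u_smooth i [:: a] xX)).
Unshelve. all: by end_near. Qed.

Lemma dS_antisym a i b : dS a i b - dS b i a
  = alpha * ((sigma x)^-1 * partial a sigma x * Smx x i b
             - (sigma x)^-1 * partial b sigma x * Smx x i a).
Proof. by rewrite /dS !SmxE partial_u_comm powR_pred; ring. Qed.

Lemma sigma_laplacian_u i : \sum_a sigma x * partial a (partial a (u i)) x
  = - \sum_a partial a (u i) x * partial a sigma x.
Proof.
apply/eqP; rewrite -addr_eq0 -big_split; apply/eqP.
rewrite -[RHS](u_eq i xX); apply: eq_bigr => a _ /=.
have -> : (fun y => (sigma y *: grad (u i) y) 0 a) = sigma * partial a (u i).
  by apply/funext => y; rewrite !mxE.
rewrite /partial.
case: (is_deriveM (is_derive_sigma a) (is_derive_partial_u i a a)) => _ ->.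
by congr (_ + _); exact: mulrC.
Qed.

Lemma dS_trace i : \sum_a dS a i a
  = (alpha - 1) * \sum_a (sigma x)^-1 * partial a sigma x * Smx x i a.
Proof.
set P := \sum_a partial a (u i) x * partial a sigma x.
transitivity (alpha * (sigma x `^ alpha / sigma x) * P
              + sigma x `^ alpha / sigma x * \sum_a sigma x * partial a (partial a (u i)) x).
  rewrite big_split /= !mulr_sumr; congr (_ + _); apply: eq_bigr => a _.
    by rewrite powR_pred; ring.
  by rewrite mulrA divfK ?gt_eqF.
have -> : \sum_a (sigma x)^-1 * partial a sigma x * Smx x i a
          = sigma x `^ alpha / sigma x * P.
  by rewrite /P mulr_sumr; apply: eq_bigr => a _; rewrite SmxE; ring.
by rewrite sigma_laplacian_u -/P; ring.
Qed.

Definition dSmx a : 'M[R]_n := \matrix_(i, b) dS a i b.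

Hypothesis det_Smx_gt0 : \forall y \near x, 0 < \det (Smx y).

Let Smx_unit : \forall y \near x, Smx y \in unitmx.
Proof. by apply: filterS det_Smx_gt0 => y det_gt0; rewrite unitmxE unitfE gt_eqF. Qed.

Lemma is_derive_vol a :
  is_derive x (delta_mx 0 a) vol (\tr (dSmx a *m \adj (Smx x))).
Proof.
apply: near_eq_is_derive (is_derive_det (N := dSmx a) _) => [|i b].
  by apply: filterS det_Smx_gt0 => y det_gt0; rewrite volE // ltW.
by rewrite [dSmx a i b]mxE; exact: is_derive_Smx.
Qed.

Let vol_x : vol x = \det (Smx x).
Proof. exact/volE/ltW/(nbhs_singleton det_Smx_gt0). Qed.

Let vol_gt0 : 0 < vol x.
Proof. by rewrite vol_x (nbhs_singleton det_Smx_gt0). Qed.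

Lemma mxtrace_adj_dSmx a :
  \tr (dSmx a *m \adj (Smx x)) = vol x * \tr (invmx (Smx x) *m dSmx a).
Proof.
rewrite /invmx (nbhs_singleton Smx_unit) -scalemxAl mxtraceZ mxtrace_mulC vol_x.
by rewrite mulVKf // gt_eqF // (nbhs_singleton det_Smx_gt0).
Qed.

Lemma grad_ln_vol :
  grad (fun y => ln (vol y)) x = \row_c \tr (invmx (Smx x) *m dSmx c).
Proof.
apply/rowP => c; rewrite [LHS]mxE [RHS]mxE /partial.
case: (is_derive_comp1 (is_derive_vol c) (is_derive1_ln vol_gt0)) => _ ->.
by rewrite mxtrace_adj_dSmx mulKf // gt_eqF.
Qed.

Lemma is_derive_gram_invmx a i j : is_derive x (delta_mx 0 a)
  (fun y => invmx (gram y) i j) (gram_invmx_deriv (Smx x) (dSmx a) i j).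
Proof.
under eq_fun do rewrite gramE.
apply: is_derive_invmx => [k l|]; last first.
  by apply: filterS Smx_unit => y; rewrite unitmx_mul unitmx_tr => ->.
apply: is_derive_mulmx => p q.
  by rewrite [dSmx a p q]mxE; exact: is_derive_Smx.
rewrite [(dSmx a)^T p q]mxE [dSmx a q p]mxE.
by under eq_fun do rewrite mxE; exact: is_derive_Smx.
Qed.

Lemma grad_gram_invmx i j : grad (fun y => invmx (gram y) i j) x
  = \row_a gram_invmx_deriv (Smx x) (dSmx a) i j.
Proof.
apply/rowP => a; rewrite [LHS]mxE [RHS]mxE /partial.
by case: (is_derive_gram_invmx a i j).
Qed.

Lemma grad_vol_gram_invmx i j :
  grad (fun y => vol y * invmx (gram y) i j) x
  = vol x *: grad (fun y => invmx (gram y) i j) x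
    + (invmx (Smx x *m (Smx x)^T) i j * vol x) *: grad (fun y => ln (vol y)) x.
Proof.
rewrite grad_gram_invmx grad_ln_vol row_lin_comb -gramE; apply/rowP => a.
rewrite [LHS]mxE [RHS]mxE /partial.
case: (is_deriveM (is_derive_vol a) (is_derive_gram_invmx a i j)) => _ ->.
by rewrite mxtrace_adj_dSmx; congr (_ + _); exact: mulrA.
Qed.

Lemma grad_ln_sigmaE : (n%:R - 2) * alpha + 1 != 0 ->
  grad (fun y => ln (sigma y)) x
  = ((n%:R - 2) * alpha + 1)^-1 *: (grad (fun y => ln (vol y)) x
      + \sum_i \sum_j dotv (grad (fun y => invmx (gram y) i j) x) (Sfield i x)
                       *: Sfield j x).
Proof.
move=> k_neq0.
under eq_bigr => i _ do under eq_bigr => j _ do rewrite grad_gram_invmx.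
rewrite sum_dotv_rows -/(Smx x) grad_ln_vol grad_ln_sigma.
rewrite scalerDr row_lin_comb; apply: eq_mx => _ c; rewrite -mulrDr.
rewrite (gram_gradient_identity (A := Smx x) (N := dSmx) (al := alpha)
  (f := fun a => (sigma x)^-1 * partial a sigma x)) ?mulKf //.
- exact: nbhs_singleton Smx_unit.
- (* Only the first [mxE] redex: matching it against the [Smx] entries would
     unfold them, which is very slow. *)
  by move=> a i b; rewrite {1}mxE {1}mxE; exact: dS_antisym.
- by move=> i; under eq_bigr do rewrite mxE; exact: dS_trace.
Qed.

End Conductivity.

Theorem lemma2p2 (R : realType) (n : nat) (hn : (2 <= n)%N)
  (X : set 'rV[R]_n) (hXo : open X) (hXc : convex_set X) (hXb : bounded_set X)
  (alpha : R) (halpha : (n%:R - 2) * alpha + 1 != 0)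
  (sigma : 'rV[R]_n -> R) (hsig_pos : forall x, X x -> 0 < sigma x)
  (hsig_smooth : smooth_on X sigma)
  (u : 'I_n -> 'rV[R]_n -> R) (hu_smooth : forall i, smooth_on X (u i))
  (hu_eq : forall i x, X x -> divg (fun y => sigma y *: grad (u i) y) x = 0)
  (Omega : set 'rV[R]_n) (hOo : open Omega) (hOX : Omega `<=` X)
  (c0 : R) (hc0 : 0 < c0) :
  let S := fun (i : 'I_n) (x : 'rV[R]_n) => (sigma x `^ alpha) *: grad (u i) x in
  (forall x, Omega x -> c0 <= \det (\matrix_(i < n, j < n) S i x 0 j)) ->
  let H := fun x : 'rV[R]_n => \matrix_(i < n, j < n) dotv (S i x) (S j x) in
  let Hinv := fun (i j : 'I_n) (x : 'rV[R]_n) => invmx (H x) i j in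
  let D := fun x : 'rV[R]_n => Num.sqrt (\det (H x)) in
  let cF := ((n%:R - 2) * alpha + 1)^-1 in
  forall x, Omega x ->
    grad (fun y => ln (sigma y)) x
      = (cF / D x) *: \sum_(i < n) \sum_(j < n)
          dotv (grad (fun y => D y * Hinv i j y) x) (S i x) *: S j x
    /\
    grad (fun y => ln (sigma y)) x
      = cF *: (grad (fun y => ln (D y)) x
               + \sum_(i < n) \sum_(j < n)
                   dotv (grad (Hinv i j) x) (S i x) *: S j x).
Proof.
move=> S hdet H Hinv D cF x xO.
have xX := hOX x xO.
have det_gt0 : \forall y \near x, 0 < \det (Smx alpha sigma u y).
  near=> y; apply: lt_le_trans hc0 (hdet y _); near: y.
  exact: open_nbhs_nbhs.
have det_x_gt0 := nbhs_singleton det_gt0.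
have D_x : D x = \det (Smx alpha sigma u x) := volE (ltW det_x_gt0).
have second := grad_ln_sigmaE hXo hsig_pos hsig_smooth hu_smooth hu_eq xX det_gt0 halpha.
split=> //; rewrite (sum_dotv_rows_productE (d := D x)
  (gD := grad (fun y => ln (D y)) x) (gG := fun i j => grad (Hinv i j) x)).
- by rewrite scalerA divfK // D_x gt_eqF.
- by rewrite unitmxE unitfE gt_eqF //; exact: det_x_gt0.
- move=> i j.
  by rewrite [LHS](grad_vol_gram_invmx hsig_pos hsig_smooth hu_smooth xX det_gt0).
Unshelve. all: by end_near. Qed.
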